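(* Let $(p,f)$ be an SCF-RT rationalizable within the class of all RUM-CFs, let $(x,y)\in D$, and for $t\geq0$ let $q(x,y)(t)=\frac{p(x,y)f(x,y)(t)}{p(y,x)f(y,x)(t)}$. If $q(x,y)(t)\geq1$ for almost all $t\geq0$, then every RUM-CF $(u,g,r)$ rationalizing $(p,f)$ satisfies $u(x)\geq u(y)$. If additionally $q(x,y)(t)>1$ on a set of $t$ of positive Lebesgue measure, then every such model satisfies $u(x)>u(y)$.
   Context: $X$ is a finite set of options; $C=\{(x,y): x,y\in X,\ x\neq y\}$; $D\subseteq C$ is a fixed non-empty set with $(x,y)\in D\Rightarrow (y,x)\in D$. An SCF $p$ assigns to each $(x,y)\in D$ a number $p(x,y)>0$ with $p(x,y)+p(y,x)=1$. An SCF-RT is a pair $(p,f)$ where $p$ is an SCF and $f$ assigns to each $(x,y)\in D$ a strictly positive density $f(x,y)$ on $\mathbb{R}^+$ with cdf $F(x,y)$. A RUM is a pair $(u,g)$ with $u:X\to\mathbb{R}$ and $g$ assigning to each $(x,y)\in C$ a density $g(x,y)$ on $\mathbb{R}$ (cdf $G(x,y)$) with $\int v\,g(x,y)(v)\,dv=u(x)-u(y)$, $g(x,y)(v)=g(y,x)(-v)$ for all $v$, and connected support. A RUM-CF is $(u,g,r)$ with $(u,g)$ a RUM and $r:\mathbb{R}^{++}\to\mathbb{R}^+$ continuous, strictly decreasing where $r(v)>0$, $\lim_{v\to0}r(v)=\infty$, $\lim_{v\to\infty}r(v)=0$; $r^{-1}(t)$ ($t>0$) is the inverse of $r$ restricted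 to $\{r>0\}$. It rationalizes $(p,f)$ if for all $(x,y)\in D$: $G(x,y)(0)=p(y,x)$ and $\frac{1-G(x,y)(r^{-1}(t))}{1-G(x,y)(0)}=F(x,y)(t)$ for all $t>0$. *)

From HB Require Import structures.
From mathcomp Require Import all_boot all_order all_algebra.
From mathcomp Require Import all_classical all_reals all_analysis.
Set Implicit Arguments. Unset Strict Implicit. Unset Printing Implicit Defensive.
Import Order.TTheory GRing.Theory Num.Theory.
Import numFieldNormedType.Exports.
Local Open Scope classical_set_scope.
Local Open Scope ring_scope.

Section Defs.
Variable R : realType.
Notation leb := (@lebesgue_measure R).

Definition density (g : R -> R) : Prop :=
  measurable_fun setT g /\ (forall v, 0 <= g v) /\
  (\int[leb]_(v in setT) (g v)%:E = 1)%E.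

Definition cdfR (g : R -> R) (s : R) : R := Rintegral leb `]-oo, s] g.

Definition pos_density (f : R -> R) : Prop :=
  measurable_fun (`[0%R, +oo[%classic : set R) f /\ (forall t, 0 <= t -> 0 < f t) /\
  (\int[leb]_(t in (`[0%R, +oo[%classic : set R)) (f t)%:E = 1)%E.

Definition cdfP (f : R -> R) (t : R) : R := Rintegral leb `[0, t] f.

Variable X : finType.

Definition isD (D : {set X * X}) : Prop :=
  (forall x y, (x, y) \in D -> x != y) /\ D != finset.set0 /\
  (forall x y, (x, y) \in D -> (y, x) \in D).

Definition SCF (D : {set X * X}) (p : X -> X -> R) : Prop :=
  forall x y, (x, y) \in D -> 0 < p x y /\ p x y + p y x = 1.

Definition SCF_RT (D : {set X * X}) (p : X -> X -> R) (f : X -> X -> R -> R)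
  : Prop :=
  SCF D p /\ forall x y, (x, y) \in D -> pos_density (f x y).

Definition RUM (u : X -> R) (g : X -> X -> R -> R) : Prop :=
  forall x y, x != y ->
    density (g x y) /\
    leb.-integrable setT (fun v => (v * g x y v)%:E) /\
    (\int[leb]_(v in setT) (v * g x y v)%:E = (u x - u y)%:E)%E /\
    (forall v, g x y v = g y x (- v)) /\
    connected [set v | 0 < g x y v].

(* r : R^{++} -> R^+ (only values on ]0,+oo[ matter) *)
Definition CF (r : R -> R) : Prop :=
  (forall v, 0 < v -> 0 <= r v) /\
  {within `]0, +oo[, continuous r} /\
  (forall v w, 0 < v -> v < w -> 0 < r v -> 0 < r w -> r w < r v) /\
  (r x @[x --> 0^'+] --> +oo) /\
  (r x @[x --> +oo] --> 0).

Definition RUM_CF (u : X -> R) (g : X -> X -> R -> R) (r : R -> R) : Prop :=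
  RUM u g /\ CF r.

(* (u,g,r) rationalizes (p,f).  r^{-1}(t), t > 0, is the (unique) v > 0
   with r v = t. *)
Definition rationalizes (D : {set X * X}) (p : X -> X -> R)
  (f : X -> X -> R -> R) (u : X -> R) (g : X -> X -> R -> R) (r : R -> R)
  : Prop :=
  forall x y, (x, y) \in D ->
    cdfR (g x y) 0 = p y x /\
    forall t, 0 < t -> forall v, 0 < v -> r v = t ->
      (1 - cdfR (g x y) v) / (1 - cdfR (g x y) 0) = cdfP (f x y) t.

Definition rationalizable (D : {set X * X}) (p : X -> X -> R)
  (f : X -> X -> R -> R) : Prop :=
  exists u g r, RUM_CF u g r /\ rationalizes D p f u g r.

Definition qratio (p : X -> X -> R) (f : X -> X -> R -> R) (x y : X) (t : R)
  : R := (p x y * f x y t) / (p y x * f y x t).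

End Defs.

(* Write T(a,b)(s) = 1 - G(a,b)(s) for the upper tail of g(a,b).  The layer-cake
   formula for the first moment, together with the reflection
   g(x,y)(v) = g(y,x)(-v), gives
     u(x) - u(y) = \int_0^oo (T(x,y)(s) - T(y,x)(s)) ds.
   Rationalization turns T(a,b)(s) into \int_0^{r s} p(a,b) f(a,b) whenever
   r s > 0, and forces T(a,b)(s) = 0 where r s = 0.  So if
   p(y,x) f(y,x) <= p(x,y) f(x,y) a.e. (i.e. q >= 1 a.e.) the integrand is
   nonnegative; if moreover the inequality is strict on a set of positive
   measure, some \int_0^{t1} of the difference is a positive constant c, and
   since r s -> +oo as s -> 0, the integrand is at least c on an interval
   ]0, e[. *)

From mathcomp Require Import all_boot all_order all_algebra.
From mathcomp Require Import all_classical all_reals all_analysis.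
From mathcomp Require Import measurable_realfun lra.
Import Order.TTheory GRing.Theory Num.Theory.
Import numFieldNormedType.Exports.
Local Open Scope classical_set_scope.
Local Open Scope ring_scope.

Section first_moment.
Context {R : realType}.
Local Notation mu := (@lebesgue_measure R).

Lemma ge0_first_moment_layer_cake (h : R -> R) :
  measurable_fun setT h -> (forall v, 0 <= h v) ->
  (\int[mu]_(v in `[0%R, +oo[) (v * h v)%:E =
   \int[mu]_(s in `[0%R, +oo[) \int[mu]_(v in `]s, +oo[) (h v)%:E)%E.
Proof.
move=> mh h0.
(* Tonelli for 1_{0 <= s < v} h(v): integrating out s gives v h(v). *)
pose F (vs : R * R) := (\1_`[0, vs.1[ vs.2 * h vs.1)%:E.
have mF : measurable_fun setT F.
  apply/measurable_EFinP/measurable_funM; last exact: measurableT_comp.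
  apply: measurable_indic; rewrite [X in measurable X](_ : _ =
      [set vs | 0 <= vs.2] `&` [set vs | vs.2 < vs.1]); last first.
    by apply/seteqP; split => vs; rewrite /= in_itv/= => /andP.
  apply: measurableI.
  - by rewrite -[X in measurable X]setTI; exact: measurable_fun_ler.
  - by rewrite -[X in measurable X]setTI; exact: measurable_fun_ltr.
have F0 vs : (0 <= F vs)%E by rewrite lee_fin mulr_ge0.
transitivity (\int[mu]_v \int[mu]_s F (v, s))%E.
  rewrite integral_mkcond; apply: eq_integral => v _ /=.
  under eq_integral do rewrite /F /= mulrC EFinM.
  rewrite ge0_integralZl_EFin//; last exact/measurable_EFinP/measurable_indic.
  rewrite integral_indic// setIT [X in (_ * X)%E]lebesgue_measure_itv/= lte_fin.
  rewrite patchE.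
  have [v0|v0|<-] := ltgtP 0 v.
  - by rewrite mem_set/= ?in_itv/= ?(ltW v0)// EFinN sube0 -EFinM mulrC.
  - by rewrite memNset ?mule0//= in_itv/= andbT leNgt v0.
  - by rewrite mem_set/= ?in_itv/= ?lexx// mul0r mule0.
rewrite (@fubini_tonelli _ _ _ _ R mu mu F mF F0) [RHS]integral_mkcond.
apply: eq_integral => s _ /=; rewrite patchE.
have [s0|s0] := leP 0 s; last first.
  rewrite memNset/=; last by rewrite in_itv/= andbT leNgt s0.
  apply: integral0_eq => v _.
  by rewrite /F/= indicE memNset ?mul0r//= in_itv/= leNgt s0.
rewrite mem_set/= ?in_itv/= ?s0// [RHS]integral_mkcond.
apply: eq_integral => v _; rewrite /F /= patchE indicE.
have [sv|vs] := ltP s v.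
  by rewrite !mem_set/= ?in_itv/= ?s0 ?sv ?andbT// mul1r.
by rewrite !memNset ?mul0r//= in_itv/= ?andbT ltNge vs ?andbF.
Qed.

End first_moment.

Section density_tail.
Context {R : realType}.
Local Notation mu := (@lebesgue_measure R).
Variable h : R -> R.
Hypothesis dh : density h.

Let mh : measurable_fun setT h. Proof. by case: dh. Qed.
Let h0 v : 0 <= h v. Proof. by case: dh => _ []. Qed.

Lemma density_tailE s :
  (\int[mu]_(v in `]s, +oo[) (h v)%:E = (1 - cdfR h s)%:E)%E.
Proof.
have [_ [_ h1]] := dh.
have lhs_fin : (\int[mu]_(v in `]-oo, s]) (h v)%:E)%E \is a fin_num.
  rewrite ge0_fin_numE; last by apply: integral_ge0 => v _; rewrite lee_fin h0.
  rewrite (@le_lt_trans _ _ 1%E) ?ltry// -h1.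
  apply: ge0_subset_integral => //; first by apply/measurable_EFinP; exact: mh.
  by move=> v _; rewrite lee_fin h0.
have : (\int[mu]_(v in `]-oo, s]) (h v)%:E +
        \int[mu]_(v in `]s, +oo[) (h v)%:E = 1)%E.
  rewrite -ge0_integral_setU//=.
  - by rewrite -setCitvr setvU.
  - by apply/measurable_EFinP; exact: measurable_funTS.
  - by move=> v _; rewrite lee_fin h0.
  - by rewrite -setCitvr disj_set2E setICl.
by rewrite /cdfR /Rintegral EFinB fineK// => <-; rewrite addeAC subee// add0e.
Qed.

Lemma density_tail_ge0 s : 0 <= 1 - cdfR h s.
Proof.
rewrite -lee_fin -density_tailE.
by apply: integral_ge0 => v _; rewrite lee_fin h0.
Qed.

Lemma density_tail_nonincreasing :
  {homo (fun s => 1 - cdfR h s) : s t / s <= t >-> t <= s}.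
Proof.
move=> s t st; rewrite -lee_fin -!density_tailE.
apply: ge0_subset_integral => //.
- by apply/measurable_EFinP; exact: measurable_funTS.
- by move=> v _; rewrite lee_fin h0.
- by apply: subset_itvr; rewrite bnd_simp.
Qed.

Lemma measurable_density_tail (A : set R) : measurable A ->
  measurable_fun A (fun s => (1 - cdfR h s)%:E).
Proof.
move=> mA; apply/measurable_EFinP.
exact: nonincreasing_measurable mA density_tail_nonincreasing.
Qed.

Lemma density_first_moment_tail :
  (\int[mu]_(v in `[0%R, +oo[) (v * h v)%:E =
   \int[mu]_(s in `]0%R, +oo[) (1 - cdfR h s)%:E)%E.
Proof.
rewrite ge0_first_moment_layer_cake// integral_itv_obnd_cbnd.
  by apply: eq_integral => s _; rewrite density_tailE.
exact: measurable_density_tail.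
Qed.

Lemma density_tail_integral_fin_num :
  mu.-integrable setT (fun v => (v * h v)%:E) ->
  (\int[mu]_(s in `]0%R, +oo[) (1 - cdfR h s)%:E)%E \is a fin_num.
Proof.
case/integrableP => _ /= moment_fin.
rewrite -density_first_moment_tail ge0_fin_numE; last first.
  apply: integral_ge0 => v; rewrite /= in_itv/= andbT => v0.
  by rewrite lee_fin mulr_ge0.
have -> : (\int[mu]_(v in `[0%R, +oo[) (v * h v)%:E =
           \int[mu]_(v in `[0%R, +oo[) `|(v * h v)%:E|)%E.
  apply: eq_integral => v; rewrite inE/= in_itv/= andbT => v0.
  by rewrite ger0_norm// mulr_ge0.
apply: le_lt_trans moment_fin; apply: ge0_subset_integral => //.
apply: measurableT_comp => //; apply/measurable_EFinP; exact: measurable_funM.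
Qed.

End density_tail.

Section mean_tail_difference.
Context {R : realType}.
Local Notation mu := (@lebesgue_measure R).
Variables (g1 g2 : R -> R) (m : R).
Hypotheses (dg1 : density g1) (dg2 : density g2).
Hypothesis g1_reflect : forall v, g1 v = g2 (- v).
Hypotheses (ig1 : mu.-integrable setT (fun v => (v * g1 v)%:E))
  (ig2 : mu.-integrable setT (fun v => (v * g2 v)%:E)).
Hypothesis mean_g1 : (\int[mu]_(v in setT) (v * g1 v)%:E = m%:E)%E.

Lemma first_moment_negative_part :
  (\int[mu]_(v in `]-oo, 0%R]) (v * g1 v)%:E =
   - \int[mu]_(v in `[0%R, +oo[) (v * g2 v)%:E)%E.
Proof.
have [mg2 [g2_ge0 _]] := dg2.
transitivity (- \int[mu]_(v in `]-oo, 0%R]) (`|v| * g2 (- v))%:E)%E.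
  rewrite -integral_ge0N; last by move=> v _; rewrite lee_fin mulr_ge0.
  apply: eq_integral => v; rewrite inE/= in_itv/= => v0.
  by rewrite g1_reflect ler0_norm// mulNr opprK.
congr (- _)%E.
transitivity (\int[mu]_(v in `[0%R, +oo[) (`|v| * g2 v)%:E)%E; last first.
  apply: eq_integral => v; rewrite inE/= in_itv/= andbT => v0.
  by rewrite ger0_norm.
rewrite ge0_integration_by_substitution0.
- by apply: eq_integral => v _; rewrite normrN.
- by apply/measurable_EFinP; exact: measurable_funM.
- by move=> v; rewrite lee_fin mulr_ge0.
Qed.

Lemma mean_tail_difference :
  (m%:E = \int[mu]_(s in `]0%R, +oo[) (1 - cdfR g1 s)%:E -
          \int[mu]_(s in `]0%R, +oo[) (1 - cdfR g2 s)%:E)%E.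
Proof.
have mg1E := measurable_int _ ig1.
have split0 : `]-oo, 0%R] `|` `]0%R, +oo[ = [set: R].
  by rewrite -setCitvr setvU.
rewrite -mean_g1 -split0 integral_setU//=.
- rewrite first_moment_negative_part integral_itv_obnd_cbnd.
    by rewrite !density_first_moment_tail// addeC.
  exact: measurable_funTS.
- exact: measurable_funTS.
- by rewrite -setCitvr disj_set2E setICl.
Qed.

Lemma le_mean_tail_gap c e : 0 <= c -> 0 < e ->
  (forall s, 0 < s -> 1 - cdfR g2 s <= 1 - cdfR g1 s) ->
  (forall s, 0 < s -> s < e -> 1 - cdfR g2 s + c <= 1 - cdfR g1 s) ->
  c * e <= m.
Proof.
move=> c0 e0 tail_le tail_gap.
pose k s := c * \1_`]0%R, e[ s.
have k0 s : 0 <= k s by rewrite mulr_ge0.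
have mk : measurable_fun (`]0%R, +oo[ : set R) (fun s => (k s)%:E).
  by apply/measurable_EFinP/measurable_funM => //; exact: measurable_indic.
have int_k : (\int[mu]_(s in `]0%R, +oo[) (k s)%:E = (c * e)%:E)%E.
  under eq_integral do rewrite EFinM.
  rewrite ge0_integralZl_EFin//; last exact/measurable_EFinP/measurable_indic.
  rewrite integral_indic// setIidl; last by apply: subset_itvl; rewrite bnd_simp.
  by rewrite [X in (_ * X)%E]lebesgue_measure_itv/= lte_fin e0 EFinN sube0 -EFinM.
have : (\int[mu]_(s in `]0%R, +oo[) (1 - cdfR g2 s)%:E + (c * e)%:E <=
        \int[mu]_(s in `]0%R, +oo[) (1 - cdfR g1 s)%:E)%E.
  rewrite -int_k -ge0_integralD//.
  - apply: ge0_le_integral => //.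
    + move=> s _; apply: adde_ge0; rewrite lee_fin ?k0//.
      exact: density_tail_ge0.
    + by apply: emeasurable_funD => //; exact: measurable_density_tail.
    + exact: measurable_density_tail.
    + move=> s; rewrite /= in_itv/= andbT => s0; rewrite -EFinD lee_fin /k indicE.
      have [se|es] := ltP s e.
        by rewrite mem_set ?mulr1 ?tail_gap//= in_itv/= s0.
      by rewrite memNset ?mulr0 ?addr0 ?tail_le//= in_itv/= s0 ltNge es.
  - by move=> s _; rewrite lee_fin; exact: density_tail_ge0.
  - exact: measurable_density_tail.
  - by move=> s _; rewrite lee_fin.
have := mean_tail_difference.
rewrite -(fineK (density_tail_integral_fin_num _ dg1 ig1)).
rewrite -(fineK (density_tail_integral_fin_num _ dg2 ig2)).
move=> mE; rewrite -EFinB in mE; rewrite -EFinD lee_fin (EFin_inj mE); lra.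
Qed.

End mean_tail_difference.

Lemma integral_gt0 d (T : measurableType d) (R : realType)
    (mu : {measure set T -> \bar R}) (B : set T) (k : T -> R) :
  measurable B -> measurable_fun B k -> (forall t, B t -> 0 < k t) ->
  (0 < mu B)%E -> (0 < \int[mu]_(t in B) (k t)%:E)%E.
Proof.
move=> mB mk k_gt0 muB_gt0.
rewrite lt0e integral_ge0 ?andbT; last by move=> t /k_gt0/ltW; rewrite lee_fin.
apply/negP => /eqP int_k0.
have /(ae_eq_integral_abs mu mB ((measurable_EFinP _ _).2 mk)) [N [mN N0 BN]] :
    (\int[mu]_(t in B) `|(k t)%:E| = 0)%E.
  rewrite -int_k0; apply: eq_integral => t /set_mem Bt.
  by rewrite gee0_abs// lee_fin ltW// k_gt0.
suff : (mu B <= mu N)%E by rewrite N0 leNgt muB_gt0.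
apply: le_measure; rewrite ?inE// => t Bt; apply: BN => /= /(_ Bt) /eqP.
by rewrite eqe gt_eqF// k_gt0.
Qed.

Section cumulative_comparison.
Context {R : realType}.
Local Notation mu := (@lebesgue_measure R).
Local Notation Rp := (`[0%R, +oo[%classic : set R).

Lemma measure_bounded_part_gt0 {A : set R} : measurable A -> A `<=` Rp ->
  (0 < mu A)%E -> exists n : nat, (0 < mu (A `&` `[0%R, n%:R]))%E.
Proof.
move=> mA ARp muA_gt0; apply/not_existsP => parts0.
have negl (n : nat) : mu.-negligible (A `&` `[0%R, n%:R]).
  apply/negligibleP; first exact: measurableI.
  apply/eqP; rewrite eq_le measure_ge0 andbT leNgt.
  exact/negP/parts0.
have [N [mN N0 AN]] := negligible_bigcup negl.
suff : (mu A <= mu N)%E by rewrite N0 leNgt muA_gt0.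
apply: le_measure; rewrite ?inE// => t At; apply: AN.
exists (Num.truncn t).+1 => //; split => //.
have := ARp _ At; rewrite /= !in_itv/= andbT => t0; rewrite t0/=.
exact/ltW/truncnS_gt.
Qed.

Context {phi psi : R -> R}.
Hypotheses (iphi : mu.-integrable Rp (EFin \o phi))
  (ipsi : mu.-integrable Rp (EFin \o psi)).
Hypotheses (phi0 : forall t, 0 <= t -> 0 <= phi t)
  (psi0 : forall t, 0 <= t -> 0 <= psi t).
Hypothesis phi_le_psi : {ae mu, forall t, 0 <= t -> phi t <= psi t}.

Let Rp_ge0 t : Rp t -> 0 <= t. Proof. by rewrite /= in_itv/= andbT. Qed.

Lemma le_Rintegral_ae {B : set R} : measurable B -> B `<=` Rp ->
  \int[mu]_(t in B) phi t <= \int[mu]_(t in B) psi t.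
Proof.
move=> mB BRp.
have iBphi : mu.-integrable B (EFin \o phi) by exact: integrableS iphi.
have iBpsi : mu.-integrable B (EFin \o psi) by exact: integrableS ipsi.
rewrite -lee_fin /Rintegral !fineK; [|exact: integrable_fin_num..].
apply: ae_ge0_le_integral => //.
- by move=> t /BRp/Rp_ge0/phi0; rewrite lee_fin.
- exact: measurable_int iBphi.
- by move=> t /BRp/Rp_ge0/psi0; rewrite lee_fin.
- exact: measurable_int iBpsi.
- case: phi_le_psi => N [mN N0 le_out_N]; exists N; split => // t /= not_le.
  by apply: le_out_N => le_t; apply: not_le => /BRp/Rp_ge0/le_t; rewrite lee_fin.
Qed.

Lemma lt_Rintegral {B : set R} : measurable B -> B `<=` Rp -> (0 < mu B)%E ->
  (forall t, B t -> phi t < psi t) ->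
  \int[mu]_(t in B) phi t < \int[mu]_(t in B) psi t.
Proof.
move=> mB BRp muB_gt0 lt_B.
have iBphi : mu.-integrable B (EFin \o phi) by exact: integrableS iphi.
have iBpsi : mu.-integrable B (EFin \o psi) by exact: integrableS ipsi.
have mphi := measurable_int _ iBphi; have mpsi := measurable_int _ iBpsi.
have mgap : measurable_fun B (fun t => psi t - phi t).
  by apply: measurable_funB; exact/measurable_EFinP.
rewrite -lte_fin /Rintegral !fineK; [|exact: integrable_fin_num..].
have -> : (\int[mu]_(t in B) (psi t)%:E =
           \int[mu]_(t in B) ((phi t)%:E + (psi t - phi t)%:E))%E.
  by apply: eq_integral => t _; rewrite -EFinD subrKC.
rewrite ge0_integralD//.
- rewrite lteDl; first by apply: integral_gt0 => // t /lt_B; rewrite subr_gt0.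
  exact: integrable_fin_num.
- by move=> t /BRp/Rp_ge0/phi0; rewrite lee_fin.
- by move=> t /lt_B/ltW; rewrite lee_fin subr_ge0.
- exact/measurable_EFinP.
Qed.

Let itv0_Rp t : `[0%R, t] `<=` Rp.
Proof. by apply: subset_itvl; rewrite bnd_simp. Qed.

Lemma le_cdfP t : cdfP phi t <= cdfP psi t.
Proof. exact: le_Rintegral_ae. Qed.

Lemma cdfP_gap_nondecreasing {t t' : R} : 0 <= t -> t <= t' ->
  cdfP psi t - cdfP phi t <= cdfP psi t' - cdfP phi t'.
Proof.
move=> t0 tt'.
have split_t' : `[0%R, t']%classic = `[0%R, t] `|` `]t, t'] :> set R.
  by apply: itv_bndbnd_setU; rewrite bnd_simp.
have disj : [disjoint `[0%R, t]%classic & `]t, t']%classic : set R].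
  apply: lt_disjoint => a b; rewrite !in_itv/= => /andP[_ a_t] /andP[t_b _].
  exact: le_lt_trans a_t t_b.
have tt'_Rp : `]t, t'] `<=` Rp.
  move=> a; rewrite /= !in_itv/= andbT => /andP[/ltW t_a _].
  exact: le_trans t_a.
have i_t' (f : R -> R) : mu.-integrable Rp (EFin \o f) ->
    mu.-integrable (`[0%R, t] `|` `]t, t']) (EFin \o f).
  by rewrite -split_t'; exact: integrableS.
rewrite /cdfP split_t' !Rintegral_setU//; [|exact: i_t'..].
have := le_Rintegral_ae (measurable_itv `]t, t']) tt'_Rp; lra.
Qed.

Lemma exists_lt_cdfP {A : set R} : measurable A -> A `<=` Rp -> (0 < mu A)%E ->
  (forall t, A t -> phi t < psi t) -> exists2 t, 0 <= t & cdfP phi t < cdfP psi t.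
Proof.
move=> mA ARp muA_gt0 lt_A.
have [n An_gt0] := measure_bounded_part_gt0 mA ARp muA_gt0.
set B := A `&` `[0%R, n%:R].
have mB : measurable B by exact: measurableI.
have mC : measurable (`[0%R, n%:R] `\` B) by exact: measurableD.
have CRp : `[0%R, n%:R] `\` B `<=` Rp by move=> t [/itv0_Rp].
have BRp : B `<=` Rp by move=> t [/ARp].
have disjB : [disjoint B & `[0%R, n%:R] `\` B] by rewrite disj_set2E setDIK.
have BC : B `|` `[0%R, n%:R] `\` B = `[0%R, n%:R]%classic.
  by rewrite setDUK// => t [].
have i_BC (f : R -> R) : mu.-integrable Rp (EFin \o f) ->
    mu.-integrable (B `|` `[0%R, n%:R] `\` B) (EFin \o f).
  by rewrite BC; exact: integrableS.
exists n%:R => //.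
rewrite /cdfP -BC !Rintegral_setU//; [|exact: i_BC..].
have := le_Rintegral_ae mC CRp.
have := lt_Rintegral mB BRp An_gt0 (fun t Bt => lt_A t Bt.1).
lra.
Qed.

End cumulative_comparison.

Section positive_density.
Context {R : realType}.
Local Notation mu := (@lebesgue_measure R).
Local Notation Rp := (`[0%R, +oo[%classic : set R).
Variable f : R -> R.
Hypothesis pf : pos_density f.

Lemma pos_density_integrable : mu.-integrable Rp (EFin \o f).
Proof.
have [mf [f_gt0 f1]] := pf.
apply/integrableP; split; first exact/measurable_EFinP.
have -> : (\int[mu]_(t in Rp) `|(EFin \o f) t| = \int[mu]_(t in Rp) (f t)%:E)%E.
  apply: eq_integral => t; rewrite inE/= in_itv/= andbT => t0.
  by rewrite ger0_norm// ltW// f_gt0.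
by rewrite f1 ltry.
Qed.

Lemma pos_density_scale_integrable k :
  mu.-integrable Rp (EFin \o (fun t => k * f t)).
Proof.
by apply: eq_integrable (integrableZl _ k pos_density_integrable) => // t _.
Qed.

Lemma cdfP_scale k t : cdfP (fun s => k * f s) t = k * cdfP f t.
Proof.
rewrite /cdfP RintegralZl//; apply: integrableS pos_density_integrable => //.
by apply: subset_itvl; rewrite bnd_simp.
Qed.

End positive_density.

Lemma cdfP_cvg0 {R : realType} (phi : R -> R) :
  (@lebesgue_measure R).-integrable `[0%R, +oo[ (EFin \o phi) ->
  cdfP phi t @[t --> 0^'+] --> 0.
Proof.
move=> iphi; apply/cvg_at_right_filter/(parameterized_integral_cvg_left ltr01).
by apply: integrableS iphi => //; apply: subset_itvl; rewrite bnd_simp.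
Qed.

(* If T s > 0, pick t > 0 with F t < T s and, by the IVT, c in ]0, s] with
   r c = t; then T c = F t < T s contradicts monotonicity. *)
Lemma nonincreasing_le0_at_root {R : realType} {T F r : R -> R} {s : R} :
  {homo T : a b / a <= b >-> b <= a} ->
  {within `]0%R, +oo[, continuous r} -> r v @[v --> 0^'+] --> +oo ->
  F t @[t --> 0^'+] --> 0 ->
  (forall v, 0 < v -> 0 < r v -> T v = F (r v)) ->
  0 < s -> r s = 0 -> T s <= 0.
Proof.
move=> T_ni r_cont r_cvgy F_cvg0 T_Fr s_gt0 rs0.
rewrite leNgt; apply/negP => Ts_gt0.
have /filter_ex [t [t_gt0 Ft_lt]] : \forall t \near 0^'+, 0 < t /\ F t < T s.
  near=> t; split; first by near: t; exact: nbhs_right_gt.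
  by near: t; exact: cvgr_lt F_cvg0 _ Ts_gt0.
have /filter_ex [v [v_gt0 v_lt_s t_le_rv]] :
    \forall v \near 0^'+, [/\ 0 < v, v < s & t <= r v].
  near=> v; split.
  - by near: v; exact: nbhs_right_gt.
  - by near: v; exact: nbhs_right_lt.
  - by near: v; move/cvgryPge : r_cvgy; apply.
have r_cont_vs : {within `[v, s], continuous r}.
  apply: continuous_subspaceW r_cont => w; rewrite /= !in_itv/= andbT.
  by move=> /andP[v_w _]; exact: lt_le_trans v_gt0 v_w.
have [c c_vs rc_t] : exists2 c, c \in `[v, s] & r c = t.
  apply: IVT => //; first exact: ltW.
  by rewrite rs0 ge_min le_max t_le_rv (ltW t_gt0) orbT.
move: c_vs; rewrite in_itv/= => /andP[v_c c_s].
have c_gt0 : 0 < c by exact: lt_le_trans v_gt0 v_c.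
have := T_ni _ _ c_s; rewrite [T c]T_Fr ?rc_t//.
lra.
Unshelve. all: by end_near.
Qed.

Section rationalizing_model.
Context {R : realType} {X : finType} {D : {set X * X}} {p : X -> X -> R}
  {f : X -> X -> R -> R} {u : X -> R} {g : X -> X -> R -> R} {r : R -> R}.
Hypotheses (HD : isD D) (Hpf : SCF_RT D p f) (Hm : RUM_CF u g r)
  (Hr : rationalizes D p f u g r).
Local Notation mu := (@lebesgue_measure R).

Lemma rationalized_tail {a b : X} {s : R} : (a, b) \in D -> 0 < s -> 0 < r s ->
  1 - cdfR (g a b) s = cdfP (fun t => p a b * f a b t) (r s).
Proof.
move=> abD s_gt0 rs_gt0.
have [cdf0 tailE] := Hr _ _ abD.
have [p_gt0 p_sum] := Hpf.1 _ _ abD.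
have p_ab : 1 - p b a = p a b by lra.
rewrite cdfP_scale; last exact: Hpf.2.
by rewrite -(tailE _ rs_gt0 _ s_gt0 erefl) cdf0 p_ab mulrC divfK// gt_eqF.
Qed.

Lemma rationalized_tail_root {a b : X} {s : R} :
  (a, b) \in D -> 0 < s -> r s = 0 -> 1 - cdfR (g a b) s = 0.
Proof.
move=> abD s_gt0 rs0.
have dg : density (g a b) by case: (Hm.1 a b (HD.1 _ _ abD)).
have [_ [r_cont [_ [r_cvgy _]]]] := Hm.2.
apply/eqP; rewrite eq_le density_tail_ge0// andbT.
have F_cvg0 :=
  cdfP_cvg0 _ (pos_density_scale_integrable _ (Hpf.2 _ _ abD) (p a b)).
apply: (nonincreasing_le0_at_root (density_tail_nonincreasing _ dg) r_cont
  r_cvgy F_cvg0 _ s_gt0 rs0).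
by move=> v v_gt0 rv_gt0; exact: rationalized_tail.
Qed.

Context {x y : X}.
Hypothesis xyD : (x, y) \in D.

Let yxD : (y, x) \in D. Proof. exact: HD.2.2 _ _ xyD. Qed.
Let dxy : density (g x y). Proof. by case: (Hm.1 _ _ (HD.1 _ _ xyD)). Qed.

Let psi t := p x y * f x y t.
Let phi t := p y x * f y x t.

Let weight_ge0 a b t : (a, b) \in D -> 0 <= t -> 0 <= p a b * f a b t.
Proof.
move=> abD t_ge0; have [p_gt0 _] := Hpf.1 _ _ abD.
have [_ [f_gt0 _]] := Hpf.2 _ _ abD.
by rewrite mulr_ge0// ltW// f_gt0.
Qed.

Let ipsi := pos_density_scale_integrable _ (Hpf.2 _ _ xyD) (p x y).
Let iphi := pos_density_scale_integrable _ (Hpf.2 _ _ yxD) (p y x).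
Let psi_ge0 t : 0 <= t -> 0 <= psi t. Proof. exact: weight_ge0. Qed.
Let phi_ge0 t : 0 <= t -> 0 <= phi t. Proof. exact: weight_ge0. Qed.

Lemma utility_tail_gap {c e : R} : 0 <= c -> 0 < e ->
  (forall s, 0 < s -> 1 - cdfR (g y x) s <= 1 - cdfR (g x y) s) ->
  (forall s, 0 < s -> s < e -> 1 - cdfR (g y x) s + c <= 1 - cdfR (g x y) s) ->
  c * e <= u x - u y.
Proof.
have [_ [ixy [mean_xy [reflect_xy _]]]] := Hm.1 _ _ (HD.1 _ _ xyD).
have [dyx [iyx _]] := Hm.1 _ _ (HD.1 _ _ yxD).
exact: le_mean_tail_gap.
Qed.

Hypothesis phi_le_psi :
  {ae mu, forall t, 0 <= t -> p y x * f y x t <= p x y * f x y t}.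

Lemma tail_le_of_density_le s : 0 < s -> 1 - cdfR (g y x) s <= 1 - cdfR (g x y) s.
Proof.
move=> s_gt0; have [r_ge0 _] := Hm.2.
have := r_ge0 _ s_gt0; rewrite le_eqVlt => /predU1P[/esym rs0|rs_gt0].
  by rewrite (rationalized_tail_root yxD s_gt0 rs0) density_tail_ge0.
rewrite !rationalized_tail//; exact: le_cdfP.
Qed.

Lemma utility_le_of_density_le : u y <= u x.
Proof.
rewrite -subr_ge0 -(mul0r 1); apply: utility_tail_gap => //.
- exact: tail_le_of_density_le.
- by move=> s s_gt0 _; rewrite addr0; exact: tail_le_of_density_le.
Qed.

Lemma utility_lt_of_density_lt {A : set R} : measurable A ->
  A `<=` `[0%R, +oo[%classic -> (0 < mu A)%E ->
  (forall t, A t -> p y x * f y x t < p x y * f x y t) -> u y < u x.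
Proof.
move=> mA ARp muA_gt0 lt_A.
have [t1 t1_ge0 gap_t1] := exists_lt_cdfP iphi ipsi phi_ge0 psi_ge0 phi_le_psi
  mA ARp muA_gt0 lt_A.
have [_ [_ [_ [r_cvgy _]]]] := Hm.2.
have [e /= e_gt0 r_gt_t1] := (cvgryPgt _).1 r_cvgy t1.
set c := cdfP psi t1 - cdfP phi t1.
have c_gt0 : 0 < c by rewrite subr_gt0.
have tail_gap s : 0 < s -> s < e ->
    1 - cdfR (g y x) s + c <= 1 - cdfR (g x y) s.
  move=> s_gt0 s_lt_e.
  have t1_lt_rs : t1 < r s.
    by apply: r_gt_t1 => //=; rewrite /ball_/= sub0r normrN gtr0_norm.
  have rs_gt0 : 0 < r s by exact: le_lt_trans t1_lt_rs.
  rewrite !rationalized_tail//.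
  have := cdfP_gap_nondecreasing iphi ipsi phi_ge0 psi_ge0 phi_le_psi t1_ge0
    (ltW t1_lt_rs).
  rewrite -/c -/psi -/phi; lra.
have := utility_tail_gap (ltW c_gt0) e_gt0 tail_le_of_density_le tail_gap.
have := mulr_gt0 c_gt0 e_gt0; lra.
Qed.

End rationalizing_model.

Section qratio.
Context {R : realType} {X : finType} {D : {set X * X}} {p : X -> X -> R}
  {f : X -> X -> R -> R} {x y : X}.
Hypotheses (Hpf : SCF_RT D p f) (yxD : (y, x) \in D).

Let denom_gt0 t : 0 <= t -> 0 < p y x * f y x t.
Proof.
move=> t_ge0; have [p_gt0 _] := Hpf.1 _ _ yxD.
have [_ [f_gt0 _]] := Hpf.2 _ _ yxD.
by rewrite mulr_gt0// f_gt0.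
Qed.

Lemma qratio_ge1E t : 0 <= t ->
  (1 <= qratio p f x y t) = (p y x * f y x t <= p x y * f x y t).
Proof. by move=> t_ge0; rewrite /qratio ler_pdivlMr ?mul1r// denom_gt0. Qed.

Lemma qratio_gt1E t : 0 <= t ->
  (1 < qratio p f x y t) = (p y x * f y x t < p x y * f x y t).
Proof. by move=> t_ge0; rewrite /qratio ltr_pdivlMr ?mul1r// denom_gt0. Qed.

End qratio.

Theorem corollary1 (R : realType) (X : finType) (D : {set X * X})
  (p : X -> X -> R) (f : X -> X -> R -> R)
  (HD : isD D) (Hpf : SCF_RT D p f) (Hrat : rationalizable D p f)
  (x y : X) (Hxy : (x, y) \in D) :
  {ae (@lebesgue_measure R), forall t : R, 0 <= t -> 1 <= qratio p f x y t} ->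
  (forall u g r, RUM_CF u g r -> rationalizes D p f u g r -> u y <= u x) /\
  ((exists A : set R, measurable A /\ A `<=` (`[0%R, +oo[%classic : set R) /\
      (0 < (@lebesgue_measure R) A)%E /\
      (forall t, A t -> 1 < qratio p f x y t)) ->
   forall u g r, RUM_CF u g r -> rationalizes D p f u g r -> u y < u x).
Proof.
move=> q_ge1.
have yxD : (y, x) \in D by exact: HD.2.2 _ _ Hxy.
have density_le : {ae @lebesgue_measure R, forall t,
    0 <= t -> p y x * f y x t <= p x y * f x y t}.
  case: q_ge1 => N [mN N0 q_ge1_out_N]; exists N; split => // t /= not_le.
  apply: q_ge1_out_N => q_t; apply: not_le => t_ge0.
  by rewrite -(qratio_ge1E Hpf yxD _ t_ge0) q_t.
split=> [u g r Hm Hr|[A [mA [ARp [muA_gt0 q_gt1]]]] u g r Hm Hr].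
  by apply: (utility_le_of_density_le HD Hpf Hm Hr Hxy).
apply: (utility_lt_of_density_lt HD Hpf Hm Hr Hxy _ mA ARp muA_gt0) => // t At.
have t_ge0 : 0 <= t by have := ARp t At; rewrite /= in_itv/= andbT.
by rewrite -(qratio_gt1E Hpf yxD _ t_ge0) q_gt1.
Qed.
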